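(* Let $\mathcal{S}\subseteq\overline{\mathbb{M}}$. Then $\Delta^{(m-1)}_e(\phi(\mathcal{S}))\subseteq\Delta^{(m-1)}_e(\mathcal{S})$ for all integers $e\ge0$.
   Context: $q$ is a prime power, $m$ a positive integer. A monomial $\mu\neq1$ in $x_0,\dots,x_m$ written $x_0^{a_0}\cdots x_k^{a_k}$ with $a_k>0$ is projectively reduced if $a_0,\dots,a_{k-1}\le q-1$; $1$ is projectively reduced. $\overline{\mathbb{M}}$ is the set of projectively reduced monomials, $\overline{\mathbb{M}}_e$ those of degree $e$. $\overline{\mathbb{M}}^{(0)}=\{x_0^a:a\ge0\}$, and for $1\le\ell\le m$, $\overline{\mathbb{M}}^{(\ell)}=\{x_0^{a_0}\cdots x_\ell^{a_\ell}\in\overline{\mathbb{M}}:a_\ell>0\}$; $\overline{\mathbb{M}}^{(\ell)}_e=\overline{\mathbb{M}}^{(\ell)}\cap\overline{\mathbb{M}}_e$. For a set $\mathcal{S}$ of monomials, $\Delta_e(\mathcal{S})=\{\mu\in\overline{\mathbb{M}}_e:\text{no }\nu\in\mathcal{S}\text{ divides }\mu\}$ and $\Delta^{(\ell)}_e(\mathcal{S})=\Delta_e(\mathcal{S})\cap\overline{\mathbb{M}}^{(\ell)}_e$. Given $\mathcal{S}\subseteq\overline{\mathbb{M}}$, for $\mu=x_0^{i_0}\cdots x_m^{i_m}\in\mathcal{S}$ set $\phi(\mu)=\mu x_{m-1}/x_m$ if $x_0^{i_0}\cdots x_{m-2}^{i_{m-2}}x_{m-1}^{i_{m-1}+i_m}\notin\mathcal{S}$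 and $i_{m-1}+1<q$, and $\phi(\mu)=\mu$ otherwise; $\phi(\mathcal{S})$ is the image. *)

From mathcomp Require Import all_boot.
Set Implicit Arguments. Unset Strict Implicit. Unset Printing Implicit Defensive.

(* A monomial x_0^{a_0} ... x_m^{a_m} in the variables x_0,...,x_m is
   represented by its exponent vector. *)
Definition mon (m : nat) := {ffun 'I_m.+1 -> nat}.

(* exponent of x_j (0 if j > m) *)
Definition expo (m : nat) (mu : mon m) (j : nat) : nat :=
  odflt 0%N (omap mu (insub j)).

Definition deg (m : nat) (mu : mon m) : nat := \sum_(i < m.+1) mu i.

Definition mdvd (m : nat) (nu mu : mon m) : Prop := forall i, nu i <= mu i.

(* projectively reduced: either mu = 1, or writing mu = x_0^{a_0}...x_k^{a_k}
   with a_k > 0 (k the largest index with nonzero exponent),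
   a_0, ..., a_{k-1} <= q - 1. *)
Definition proj_reduced (q m : nat) (mu : mon m) : Prop :=
  forall k : nat, 0 < expo mu k -> (forall j, k < j -> expo mu j = 0) ->
    forall j, j < k -> expo mu j <= q - 1.

Definition Mbar_l (q m l : nat) (mu : mon m) : Prop :=
  if l == 0 then (forall j, 0 < j -> expo mu j = 0)
  else [/\ proj_reduced q mu, 0 < expo mu l & forall j, l < j -> expo mu j = 0].

Definition Delta (q m e : nat) (S : mon m -> Prop) (mu : mon m) : Prop :=
  [/\ proj_reduced q mu, deg mu = e & forall nu, S nu -> ~ mdvd nu mu].

Definition Delta_l (q m l e : nat) (S : mon m -> Prop) (mu : mon m) : Prop :=
  Delta q e S mu /\ Mbar_l q l mu.

Definition ix_prev (m : nat) : 'I_m.+1 := inord m.-1.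
Definition ix_last (m : nat) : 'I_m.+1 := ord_max.

Definition collapse (m : nat) (mu : mon m) : mon m :=
  [ffun i => if i == ix_last m then 0
             else if i == ix_prev m then mu (ix_prev m) + mu (ix_last m)
             else mu i].

Definition shift (m : nat) (mu : mon m) : mon m :=
  [ffun i => if i == ix_last m then (mu i).-1
             else if i == ix_prev m then (mu i).+1
             else mu i].

Definition phi (q m : nat) (S : pred (mon m)) (mu : mon m) : mon m :=
  if ~~ S (collapse mu) && ((mu (ix_prev m)).+1 < q) then shift mu else mu.

Definition phi_set (q m : nat) (S : pred (mon m)) : mon m -> Prop :=
  fun nu => exists2 mu, S mu & phi q S mu = nu.

Definition prime_power (q : nat) : Prop :=
  exists p k, [/\ prime p, 0 < k & q = p ^ k].

From mathcomp Require Import all_boot.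

Set Implicit Arguments. Unset Strict Implicit. Unset Printing Implicit Defensive.

(* A monomial of M^(m-1) does not involve x_m, hence neither do its divisors.
   A monomial nu of S free of x_m is its own collapse, so phi fixes it and nu
   lies in phi(S); thus any divisor of mu in S already lies in phi(S). *)

Lemma expo_ord_max (m : nat) (mu : mon m) : expo mu m = mu ord_max.
Proof.
rewrite /expo; case: insubP => [i _ Ei|]; last by rewrite ltnSn.
by congr (mu _); apply: val_inj; rewrite Ei.
Qed.

Lemma Mbar_l_ord_max (q m l : nat) (mu : mon m) :
  l < m -> Mbar_l q l mu -> mu ord_max = 0.
Proof.
move=> lt_lm; rewrite -expo_ord_max /Mbar_l.
case: eqP => [_ |_ [_ _]]; apply; last by [].
exact: leq_ltn_trans (leq0n l) lt_lm.
Qed.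

Lemma mdvd_ord_max (m : nat) (nu mu : mon m) :
  mdvd nu mu -> mu ord_max = 0 -> nu ord_max = 0.
Proof. by move=> /(_ ord_max) + mu0; rewrite mu0 leqn0 => /eqP. Qed.

Lemma collapse_id (m : nat) (mu : mon m) : mu ord_max = 0 -> collapse mu = mu.
Proof.
move=> mu0; apply/ffunP=> i; rewrite ffunE /ix_last.
case: eqP => [-> // |_]; by case: eqP => [-> |//]; rewrite mu0 addn0.
Qed.

Lemma phi_id (q m : nat) (S : pred (mon m)) (mu : mon m) :
  S mu -> mu ord_max = 0 -> phi q S mu = mu.
Proof. by move=> Smu /collapse_id mu_fixed; rewrite /phi mu_fixed Smu. Qed.

Lemma phi_set_id (q m : nat) (S : pred (mon m)) (mu : mon m) :
  S mu -> mu ord_max = 0 -> phi_set q S mu.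
Proof. by move=> Smu mu0; exists mu; last exact: phi_id. Qed.

Lemma Delta_sub (q m e : nat) (S T : mon m -> Prop) (mu : mon m) :
  (forall nu, S nu -> mdvd nu mu -> T nu) -> Delta q e T mu -> Delta q e S mu.
Proof.
move=> ST [red_mu deg_mu T_ndvd]; split=> // nu Snu nu_dvd.
exact: (T_ndvd nu (ST nu Snu nu_dvd)).
Qed.

Theorem lemma4p7 (q m : nat) (Hq : prime_power q) (Hm : 0 < m)
  (S : pred (mon m)) (HS : forall mu, S mu -> proj_reduced q mu) :
  forall (e : nat) (mu : mon m),
    Delta_l q m.-1 e (phi_set q S) mu -> Delta_l q m.-1 e (fun nu => S nu) mu.
Proof.
move=> e mu [Delta_mu Mbar_mu]; split=> //.
have mu0 : mu ord_max = 0 by apply: Mbar_l_ord_max Mbar_mu; rewrite prednK.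
apply: Delta_sub Delta_mu => nu Snu nu_dvd.
exact: phi_set_id Snu (mdvd_ord_max nu_dvd mu0).
Qed.
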